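(* Let $r\ge2$ and $n\ge2$. For $0<b<r^n$, the lattice point of the half-open parallelepiped of $\mathcal{B}_{(r,n)}$ indexed by $b$ lies in the open parallelepiped if and only if $r\nmid b$. Consequently \[ \ell^\ast(\mathcal{B}_{(r,n)};z)=h^\ast(\mathcal{B}_{(r,n)};z)-h^\ast(\mathcal{B}_{(r,n-1)};z). \]
   Context: For $r\ge2$, $n\ge1$, let $q^{(r,n)}:=((r-1),(r-1)r,\ldots,(r-1)r^{n-1})$ and $\mathcal{B}_{(r,n)}:=\operatorname{conv}\bigl(e^{(1)},\ldots,e^{(n)},-\sum_{i=1}^n(r-1)r^{i-1}e^{(i)}\bigr)\subset\mathbb{R}^n$ (the base-$r$ $n$-simplex; its normalized volume is $r^n$). Ordering its vertices as $v^{(0)}=-\sum_i (r-1)r^{i-1}e^{(i)}$, $v^{(i)}=e^{(i)}$, the lattice points of the half-open parallelepiped $\{\sum_{i=0}^n\lambda_i(v^{(i)},1):0\le\lambda_i<1\}$ are in bijection with $0\le b<r^n$ via $\lambda_0=b/r^n$. For a lattice simplex $\Delta=\operatorname{conv}(v^{(0)},\ldots,v^{(d)})$, $\ell^\ast(\Delta;z):=\sum_{x\in\Pi^\circ_\Delta\cap\mathbb{Z}^{n+1}}z^{x_{n+1}}$ with $\Pi^\circ_\Delta:=\{\sum\lambda_i(v^{(i)},1):0<\lambda_i<1\}$, and $h^\ast(P;z)$ is the numerator of the Ehrhart series $\sum_{t\ge0}|tP\cap\mathbb{Z}^n|z^t=h^\ast(P;z)/(1-z)^{\dim P+1}$. 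*)

From HB Require Import structures.
From mathcomp Require Import all_boot all_order all_algebra.
From Stdlib Require Import ClassicalEpsilon.
Set Implicit Arguments. Unset Strict Implicit. Unset Printing Implicit Defensive.
Import Order.TTheory GRing.Theory Num.Theory.
Local Open Scope ring_scope.

Definition pbool (P : Prop) : bool :=
  if excluded_middle_informative P then true else false.

Definition simplex (n : nat) := 'I_n.+1 -> 'I_n -> int.

(* The base-r n-simplex B_(r,n), vertices ordered as v^(0) = -q^(r,n),
   v^(i) = e^(i) (i = 1..n); coordinate j : 'I_n stands for e^(j+1). *)
Definition baseSimplex (r n : nat) : simplex n :=
  fun i j => if val i == 0%N then - (((r - 1) * r ^ (val j))%N)%:Z
             else if val i == (val j).+1 then 1 else 0.

Arguments baseSimplex : clear implicits.

(* lifted vertex (v^(i), 1) in Z^(n+1); the last coordinate has index n *)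
Definition liftv n (v : simplex n) (i : 'I_n.+1) (j : 'I_n.+1) : int :=
  match @insub nat (fun k => (k < n)%N) ('I_n) (val j) with
  | Some k => v i k
  | None => 1
  end.

Definition comb n (v : simplex n) (lam : 'I_n.+1 -> rat) (j : 'I_n.+1) : rat :=
  \sum_(i < n.+1) lam i * (liftv v i j)%:~R.

Definition in_halfopen_with n (v : simplex n) (x : 'I_n.+1 -> int)
  (lam : 'I_n.+1 -> rat) : Prop :=
  (forall i, 0 <= lam i < 1) /\ (forall j, (x j)%:~R = comb v lam j).

Definition in_open n (v : simplex n) (x : 'I_n.+1 -> int) : Prop :=
  exists lam : 'I_n.+1 -> rat,
    (forall i, 0 < lam i < 1) /\ (forall j, (x j)%:~R = comb v lam j).

Definition maxabs n (v : simplex n) : nat :=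
  \max_(i < n.+1) \max_(j < n) absz (v i j).

(* lattice points of Pi^circ are contained in the box [-M, M]^(n+1) *)
Definition boxM n (v : simplex n) : nat := (n.+1 * (maxabs v).+1)%N.

Definition boxpt m (M : nat) (k : {ffun 'I_m -> 'I_(M.*2.+1)}) (j : 'I_m) : int :=
  (val (k j))%:Z - M%:Z.

(* l^*(Delta; z) = sum over lattice points x of Pi^circ of z^(x_(n+1)) *)
Definition lstar n (v : simplex n) : {poly int} :=
  \sum_(k : {ffun 'I_n.+1 -> 'I_((boxM v).*2.+1)})
     if pbool (in_open v (boxpt k)) then 'X^(absz (boxpt k ord_max)) else 0.

Definition in_dilate n (v : simplex n) (t : nat) (x : 'I_n -> int) : Prop :=
  exists mu : 'I_n.+1 -> rat,
    (forall i, 0 <= mu i) /\ \sum_(i < n.+1) mu i = t%:R /\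
    (forall j, (x j)%:~R = \sum_(i < n.+1) mu i * (v i j)%:~R).

(* |t Delta ∩ Z^n|; all such points lie in the box [-t*maxabs, t*maxabs]^n *)
Definition ehr n (v : simplex n) (t : nat) : nat :=
  #|[set k : {ffun 'I_n -> 'I_((t * maxabs v)%N.*2.+1)}
       | pbool (in_dilate v t (boxpt k))]|.

(* h is the h^*-polynomial of the d-dimensional polytope v:
   sum_t ehr t z^t = h(z)/(1-z)^(d+1), written coefficientwise. *)
Definition is_hstar n (v : simplex n) (d : nat) (h : {poly int}) : Prop :=
  forall t : nat,
    (ehr v t)%:Z = \sum_(j < t.+1) h`_j * ('C(t - j + d, d))%:Z.

(* Writing x = sum_i lam_i (v^(i), 1) for B_(r,n), one finds
   lam_0 r^n = x_(n+1) - sum_j x_j and lam_(j+1) = x_j + lam_0 (r-1) r^j.  So the lattice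
   points of the half-open parallelepiped are indexed by b = lam_0 r^n < r^n: their
   coordinates are x_j = - floor (b (r-1) r^j / r^n), the coefficients lam_(j+1) are the
   corresponding fractional parts, and the height x_(n+1) is b minus the sum of these
   floors.  A fractional part vanishes only if r^(n-j) divides b (r-1) r^j, which forces
   r | b because r and r-1 are coprime; this singles out the interior points.  The same
   parametrisation, by D = lam_0 r^n and nonnegative integers, counts the lattice points
   of t B_(r,n) and yields h^*(B_(r,n)) = sum_(b < r^n) z^(height b).  Finally the height
   of r b in B_(r,n) is the height of b in B_(r,n-1), so the indices divisible by r
   contribute exactly h^*(B_(r,n-1)). *)

From HB Require Import structures.
From mathcomp Require Import all_boot all_order all_algebra.
From mathcomp Require Import zify ring lra.
From Stdlib Require Import ClassicalEpsilon.
Import Order.TTheory GRing.Theory Num.Theory.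
Local Open Scope ring_scope.

Set Implicit Arguments. Unset Strict Implicit. Unset Printing Implicit Defensive.

Lemma sum_reindex_rel (I Z : finType) (V : nmodType) (P : pred I) (C : pred Z)
    (E : I -> Z -> bool) (w : I -> V) (w' : Z -> V) :
  (forall i, P i -> exists2 z, C z & E i z) ->
  (forall i z, C z -> E i z -> P i) ->
  (forall i z1 z2, C z1 -> C z2 -> E i z1 -> E i z2 -> z1 = z2) ->
  (forall z, C z -> exists i, E i z) ->
  (forall i1 i2 z, E i1 z -> E i2 z -> i1 = i2) ->
  (forall i z, E i z -> w i = w' z) ->
  \sum_(i | P i) w i = \sum_(z | C z) w' z.
Proof.
move=> totE PE funE surjE injE ew.
transitivity (\sum_i \sum_(z | C z && E i z) w i).
  rewrite [RHS](bigID P) /= [X in _ + X]big1 ?addr0 => [|i nPi]; last first.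
    by rewrite big1 // => z /andP[Cz /(PE _ _ Cz)]; rewrite (negbTE nPi).
  apply: eq_bigr => i Pi; have [z Cz Eiz] := totE i Pi.
  rewrite (big_pred1 z) // => z'; apply/andP/eqP => [[Cz' Eiz']|->] //.
  exact: funE Eiz' Eiz.
rewrite (exchange_big_dep C) /= => [|i z _ /andP[]//].
apply: eq_bigr => z Cz; have [i Eiz] := surjE z Cz.
rewrite (big_pred1 i) ?(ew _ _ Eiz) // => i'; rewrite Cz /=.
by apply/idP/eqP => [Ei'z|->//]; apply: injE Ei'z Eiz.
Qed.

Lemma pboolP (P : Prop) : reflect P (pbool P).
Proof. by rewrite /pbool; case: excluded_middle_informative => h; constructor. Qed.

Lemma boxpt_surj m N (x : 'I_m -> int) : (forall j, `|x j| <= N%:Z) ->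
  exists k : {ffun 'I_m -> 'I_(N.*2.+1)}, forall j, boxpt k j = x j.
Proof.
move=> xN; exists [ffun j => inord (absz (x j + N%:Z))] => j.
have /andP[xlo xhi] : - N%:Z <= x j <= N%:Z by rewrite -ler_norml.
rewrite /boxpt ffunE /= (@inordK N.*2); last by rewrite ltnS -lez_nat -muln2 PoszM; lia.
by rewrite gez0_abs ?addrK //; lia.
Qed.

Lemma boxpt_inj m N (k1 k2 : {ffun 'I_m -> 'I_(N.*2.+1)}) :
  boxpt k1 =1 boxpt k2 -> k1 = k2.
Proof.
move=> eqk; apply/ffunP => j; apply: val_inj.
by have /addIr/eqP := eqk j; rewrite eqz_nat => /eqP.
Qed.

Lemma abs_le_maxabs n (v : simplex n) i j : (absz (v i j) <= maxabs v)%N.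
Proof.
apply: leq_trans (leq_bigmax i).
exact: (leq_bigmax (F := fun j => absz (v i j)) j).
Qed.

Lemma in_open_bound n (v : simplex n) (x : 'I_n.+1 -> int) :
  in_open v x -> forall j, `|x j| <= (boxM v)%:Z.
Proof.
move=> [lam [lam01 xE]] j.
have liftv_le i : `|liftv v i j| <= (maxabs v).+1%:Z.
  rewrite /liftv; case: insubP => [k _ _|_] //.
  by rewrite -abszE lez_nat ltnW // ltnS abs_le_maxabs.
rewrite -(ler_int rat) intr_norm xE /comb; apply: le_trans (ler_norm_sum _ _ _) _.
have -> : ((boxM v)%:Z%:~R : rat) = \sum_(i < n.+1) ((maxabs v).+1%:Z)%:~R.
  by rewrite sumr_const card_ord /boxM -pmulrn -mulrnA mulnC.
apply: ler_sum => i _; have /andP[lam0 lam1] := lam01 i.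
rewrite normrM gtr0_norm // -intr_norm -[X in _ <= X]mul1r.
by apply: ler_pM => //; [exact: ltW | exact: ltW | rewrite ler_int liftv_le].
Qed.

Lemma in_dilate_bound n (v : simplex n) t (x : 'I_n -> int) :
  in_dilate v t x -> forall j, `|x j| <= (t * maxabs v)%N%:Z.
Proof.
move=> [mu [mu0 [mut xE]]] j.
rewrite -(ler_int rat) intr_norm xE; apply: le_trans (ler_norm_sum _ _ _) _.
rewrite [X in _ <= X](_ : _ = t%:R * (maxabs v)%:R); last by rewrite -natrM.
rewrite -mut mulr_suml; apply: ler_sum => i _.
by rewrite normrM (ger0_norm (mu0 i)) ler_wpM2l // -intr_norm -natr_absz ler_nat abs_le_maxabs.
Qed.

Lemma open_halfopen n (v : simplex n) x :
  in_open v x -> exists lam, in_halfopen_with v x lam.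
Proof.
move=> [lam [lam01 xE]]; exists lam; split=> // i.
by have /andP[lam0 ->] := lam01 i; rewrite ltW.
Qed.

Lemma eq_in_dilate n (v : simplex n) t (x y : 'I_n -> int) :
  x =1 y -> in_dilate v t x -> in_dilate v t y.
Proof.
by move=> xy [mu [mu_ge0 [muE xE]]]; exists mu; do 2!split=> //; move=> j; rewrite -xy.
Qed.

Lemma hockey_stick m K : (\sum_(i < K.+1) 'C(i + m, m) = 'C(K + m.+1, m.+1))%N.
Proof.
elim: K => [|K IH]; first by rewrite big_ord1 add0n !binn.
by rewrite big_ord_recr /= IH [in RHS]addSn binS addSnnS.
Qed.

Lemma hockey_stick_shift m t h :
  (\sum_(q < t.+1) (if (q + h <= t)%N then 'C(t - q - h + m, m) else 0)
   = if (h <= t)%N then 'C(t - h + m.+1, m.+1) else 0)%N.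
Proof.
case: leqP => [ht|th]; last first.
  by rewrite big1 // => q _; rewrite leqNgt (leq_trans th) // leq_addl.
have -> : t.+1 = ((t - h).+1 + h)%N by lia.
rewrite big_split_ord /= [X in (_ + X)%N]big1 => [|q _]; last by rewrite ifF //; lia.
rewrite addn0 -hockey_stick (reindex_inj rev_ord_inj) /=.
by apply: eq_bigr => i _; have := ltn_ord i; rewrite ifT => *; [congr 'C(_, _)|]; lia.
Qed.

Lemma sum_ord_mul_divmod (f : nat -> nat) c a :
  (\sum_(D < a * c) f D = \sum_(b < c) \sum_(q < a) f (q * c + b))%N.
Proof.
elim: a => [|a IH]; first by rewrite big_ord0 big1 // => b _; rewrite big_ord0.
rewrite mulSnr big_split_ord /= IH -big_split /=.
by apply: eq_bigr => b _; rewrite big_ord_recr.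
Qed.

Lemma coef_prod_geom (Y m K : nat) : (K < Y)%N ->
  (\prod_(j < m.+1) \sum_(a < Y) 'X^a : {poly int})`_K = 'C(K + m, m)%:R.
Proof.
have coef_geom k : (k < Y)%N -> (\sum_(a < Y) 'X^a : {poly int})`_k = 1.
  move=> kY; rewrite coef_sum (bigD1 (Ordinal kY)) //= coefXn eqxx big1 ?addr0 //.
  by move=> a ne; rewrite coefXn; case: eqP => // e; case/eqP: ne; apply: val_inj.
elim: m K => [|m IH] K KY; first by rewrite big_ord1 coef_geom // addn0 bin0.
rewrite big_ord_recr /= coefM -hockey_stick natr_sum; apply: eq_bigr => j _.
have jY : (j < Y)%N by apply: leq_ltn_trans KY; rewrite -ltnS.
have KjY : (K - j < Y)%N by apply: leq_ltn_trans KY; rewrite leq_subr.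
by rewrite IH // coef_geom // mulr1.
Qed.

Lemma count_compositions m (Y K : nat) : (K < Y)%N ->
  (\sum_(y : {ffun 'I_m.+1 -> 'I_Y} | (\sum_(j < m.+1) y j == K)%N) 1 = 'C(K + m, m))%N.
Proof.
move=> KY; apply/eqP; rewrite -(eqr_nat int) -(coef_prod_geom m KY).
rewrite bigA_distr_bigA /= coef_sum natr_sum big_mkcond /=; apply/eqP.
by apply: eq_bigr => y _; rewrite prodrXr coefXn eq_sym; case: (_ == _).
Qed.

Lemma sum_ord_delta (N h : nat) (c : nat -> int) :
  \sum_(j < N) ((j == h :> nat)%:R * c j) = if (h < N)%N then c h else 0.
Proof.
case: ltnP => [hN|Nh].
  rewrite (bigD1 (Ordinal hN)) //= eqxx mul1r big1 ?addr0 // => j ne.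
  by case: eqP => [e|]; [case/eqP: ne; apply: val_inj | rewrite mul0r].
by apply: big1 => j _; case: eqP => [e|]; [have := ltn_ord j; lia | rewrite mul0r].
Qed.

Lemma divn_floor_unique (p a : nat) (y : int) : (0 < p)%N ->
  0 <= p%:Z * y + a%:Z < p%:Z -> y = - (a %/ p)%N%:Z.
Proof.
move=> p_gt0; rewrite {1 2}(divn_eq a p); have := ltn_pmod a p_gt0.
set q := (a %/ p)%N; set s := (a %% p)%N => s_lt /andP[lo hi].
have : 0 < p%:Z * (y + q%:Z + 1) by lia.
have : 0 < p%:Z * (1 - (y + q%:Z)) by lia.
rewrite !pmulr_rgt0 ?ltz_nat //; lia.
Qed.

Lemma divn_floor_le (p a : nat) (y : int) : (0 < p)%N ->
  0 <= p%:Z * y + a%:Z -> - (a %/ p)%N%:Z <= y.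
Proof.
move=> p_gt0; rewrite {1}(divn_eq a p); have := ltn_pmod a p_gt0.
set q := (a %/ p)%N; set s := (a %% p)%N => s_lt lo.
have : 0 < p%:Z * (y + q%:Z + 1) by lia.
rewrite pmulr_rgt0 ?ltz_nat //; lia.
Qed.

Lemma Posz_sum (I : Type) (s : seq I) (P : pred I) (F : I -> nat) :
  (\sum_(i <- s | P i) F i)%N%:Z = \sum_(i <- s | P i) (F i)%:Z.
Proof. exact: (big_morph _ PoszD). Qed.

Lemma intr_scale_range (p : nat) (q : rat) (z : int) : (0 < p)%N ->
  0 <= q < 1 -> z%:~R = p%:R * q -> 0 <= z < p%:Z.
Proof.
move=> p_gt0 /andP[q_ge0 q_lt1] zE; have : (0 : rat) < p%:R by rewrite ltr0n.
by rewrite -(ler_int rat) -(ltr_int rat) zE; nra.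
Qed.

Section BaseSimplex.
Variable r : nat.
Hypothesis r_ge2 : (2 <= r)%N.

Local Notation wid := (widen_ord (leqnSn _)).

Definition carry m b j := (b * (r - 1) * r ^ j %/ r ^ m)%N.
Definition residue m b j := (b * (r - 1) * r ^ j %% r ^ m)%N.
Definition carries m b := (\sum_(j < m) carry m b j)%N.
Definition height m b := (b - carries m b)%N.

Lemma expr_gt0 m : (0 < r ^ m)%N.
Proof. by rewrite expn_gt0; lia. Qed.

Lemma sum_geom_base m : (\sum_(j < m) (r - 1) * r ^ j + 1 = r ^ m)%N.
Proof.
elim: m => [|m IH]; first by rewrite big_ord0.
by move: IH; rewrite big_ord_recr expnS /=; set s := (\sum_(_ < _) _)%N; nia.
Qed.

Lemma natr_expr_neq0 (R : numDomainType) m : (r ^ m)%N%:R != 0 :> R.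
Proof. by rewrite pnatr_eq0 -lt0n expr_gt0. Qed.

Lemma natr_sum_geom_base (R : pzRingType) m :
  (\sum_(j < m) (r - 1) * r ^ j)%N%:R = (r ^ m)%N%:R - 1 :> R.
Proof. by rewrite -(sum_geom_base m) natrD addrK. Qed.

Lemma carry_residueE m b j : (b * (r - 1) * r ^ j = carry m b j * r ^ m + residue m b j)%N.
Proof. exact: divn_eq. Qed.

Lemma residue_lt m b j : (residue m b j < r ^ m)%N.
Proof. exact: ltn_pmod (expr_gt0 m). Qed.

Lemma carry_residue_rat m b j :
  (b%:R / (r ^ m)%N%:R * ((r - 1) * r ^ j)%N%:R : rat) =
  (carry m b j)%:R + (residue m b j)%:R / (r ^ m)%N%:R.
Proof.
have rm_neq0 := natr_expr_neq0 rat m.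
have /(congr1 (fun k => k%:R : rat)) := carry_residueE m b j.
by rewrite -mulnA !natrD !natrM /= => eq; rewrite mulrAC eq; field.
Qed.

Lemma carries_le m b : (carries m b <= b)%N.
Proof.
rewrite -(leq_pmul2r (expr_gt0 m)) big_distrl /=.
apply: (@leq_trans (\sum_(j < m) b * ((r - 1) * r ^ j))).
  by apply: leq_sum => j _; rewrite mulnA leq_divM.
by rewrite -big_distrr leq_mul2l -(sum_geom_base m) leq_addr orbT.
Qed.

Lemma sum_baseSimplex m (mu : 'I_m.+1 -> rat) (j : 'I_m) :
  \sum_(i < m.+1) mu i * (baseSimplex r m i j)%:~R =
  - mu ord0 * ((r - 1) * r ^ j)%N%:R + mu (lift ord0 j).
Proof.
rewrite big_ord_recl /baseSimplex /= mulrNz mulrN mulNr; congr (_ + _).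
rewrite (bigD1 j) //= eqxx mulr1 big1 ?addr0 // => i ne.
by rewrite /bump add1n eqSS ifF ?mulr0 //; exact: negbTE.
Qed.

Lemma comb_wid m (lam : 'I_m.+1 -> rat) (j : 'I_m) :
  comb (baseSimplex r m) lam (wid j) = \sum_i lam i * (baseSimplex r m i j)%:~R.
Proof.
apply: eq_bigr => i _; rewrite /liftv insubT /= => [|jm]; first exact: ltn_ord.
by congr (_ * (baseSimplex _ _ _ _)%:~R); apply: val_inj.
Qed.

Lemma comb_max m (lam : 'I_m.+1 -> rat) :
  comb (baseSimplex r m) lam ord_max = \sum_i lam i.
Proof. by apply: eq_bigr => i _; rewrite /liftv insubF /= ?ltnn ?mulr1. Qed.

Lemma baseSimplex_coefs m (mu : 'I_m.+1 -> rat) (y : 'I_m -> rat) (s : rat) :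
  (forall j, y j = \sum_i mu i * (baseSimplex r m i j)%:~R) -> \sum_i mu i = s ->
  mu ord0 * (r ^ m)%N%:R = s - \sum_j y j /\
  (forall j, mu (lift ord0 j) = y j + mu ord0 * ((r - 1) * r ^ j)%N%:R).
Proof.
move=> yE muE.
have muS j : mu (lift ord0 j) = y j + mu ord0 * ((r - 1) * r ^ j)%N%:R.
  by rewrite yE sum_baseSimplex; ring.
split=> //; rewrite -muE big_ord_recl (eq_bigr _ (fun j _ => muS j)) big_split /=.
by rewrite -mulr_sumr -(sum_geom_base m) natrD -natr_sum; ring.
Qed.

Definition par_pt m b : 'I_m.+1 -> int := fun j =>
  if (j < m)%N then - (carry m b j)%:Z else (height m b)%:Z.

Definition par_coef m b : 'I_m.+1 -> rat := fun i =>
  (if i == ord0 then b else residue m b i.-1)%:R / (r ^ m)%N%:R.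

Arguments par_pt : clear implicits.
Arguments par_coef : clear implicits.

Lemma par_pt_wid m b (j : 'I_m) : par_pt m b (wid j) = - (carry m b j)%:Z.
Proof. by rewrite /par_pt /= ltn_ord. Qed.

Lemma par_pt_max m b : par_pt m b ord_max = (height m b)%:Z.
Proof. by rewrite /par_pt /= ltnn. Qed.

Lemma eq_on_wid_max (T : Type) m (f g : 'I_m.+1 -> T) :
  f ord_max = g ord_max -> (forall j : 'I_m, f (wid j) = g (wid j)) -> f =1 g.
Proof.
move=> eq_max eq_wid j; case: (ltnP j m) => jm.
  by have -> : j = wid (Ordinal jm) by apply: val_inj.
by have -> : j = ord_max by apply: val_inj => /=; have := ltn_ord j; lia.
Qed.

Lemma par_pt_index m b : par_pt m b ord_max - \sum_(j < m) par_pt m b (wid j) = b%:Z.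
Proof.
rewrite par_pt_max (eq_bigr _ (fun j _ => par_pt_wid b j)) sumrN opprK -Posz_sum.
by rewrite -PoszD subnK ?carries_le.
Qed.

Lemma par_pt_inj m b1 b2 : par_pt m b1 =1 par_pt m b2 -> b1 = b2.
Proof.
move=> eq12; apply/eqP; rewrite -eqz_nat -(par_pt_index m b1) -(par_pt_index m b2).
by rewrite eq12 (eq_bigr _ (fun j _ => eq12 (wid j))).
Qed.

Lemma par_pt_comb m b : (fun j => (par_pt m b j)%:~R) =1 comb (baseSimplex r m) (par_coef m b).
Proof.
have rm_neq0 := natr_expr_neq0 rat m.
have residueE (j : 'I_m) : (residue m b j)%:R / (r ^ m)%N%:R =
    b%:R / (r ^ m)%N%:R * ((r - 1) * r ^ j)%N%:R - (carry m b j)%:R :> rat.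
  by rewrite carry_residue_rat; ring.
have par_coefS j : par_coef m b (lift ord0 j) = (residue m b j)%:R / (r ^ m)%N%:R by [].
apply: eq_on_wid_max => [|j]; last first.
  by rewrite comb_wid sum_baseSimplex par_pt_wid par_coefS residueE /par_coef /=; ring.
rewrite par_pt_max comb_max big_ord_recl (eq_bigr _ (fun j _ => par_coefS j)).
rewrite (eq_bigr _ (fun j _ => residueE j)) sumrB -mulr_sumr -natr_sum.
rewrite natr_sum_geom_base /par_coef /= -[_%:~R]/(height m b)%:R natrB ?carries_le // natr_sum.
by rewrite mulrBr mulr1 divfK //; ring.
Qed.

Lemma par_coef_range m b : (b < r ^ m)%N -> forall i, 0 <= par_coef m b i < 1.
Proof.
move=> b_lt i; have rm_gt0 : (0 : rat) < (r ^ m)%N%:R by rewrite ltr0n expr_gt0.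
rewrite divr_ge0 ?ler0n //= ltr_pdivrMr // mul1r ltr_nat.
by case: (i == ord0); rewrite ?residue_lt.
Qed.

Lemma residue_gt0 m b j : (j < m)%N -> ~~ (r %| b)%N -> (0 < residue m b j)%N.
Proof.
move=> jm r_ndvd_b; rewrite lt0n; apply: contraNneq r_ndvd_b => res0.
have : (r ^ (m - j) * r ^ j %| b * (r - 1) * r ^ j)%N.
  by rewrite -expnD subnK ?(ltnW jm) // (carry_residueE m b j) res0 addn0 dvdn_mull.
rewrite dvdn_pmul2r ?expr_gt0 // => rmj_dvd.
have : (r %| b * (r - 1))%N.
  by apply: dvdn_trans rmj_dvd; rewrite -{1}(expn1 r) dvdn_exp2l // subn_gt0.
by rewrite Gauss_dvdl // subn1; apply: coprimenP; lia.
Qed.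

Lemma par_coef_gt0 m b : (0 < b)%N -> ~~ (r %| b)%N -> forall i, 0 < par_coef m b i.
Proof.
move=> b_gt0 r_ndvd_b i; rewrite divr_gt0 ?ltr0n ?expr_gt0 //.
case: eqP => [//|i_neq0]; apply: residue_gt0 r_ndvd_b.
by case: i i_neq0 => [[|k] ki] // []; apply: val_inj.
Qed.

Lemma comb_coefs m (x : 'I_m.+1 -> int) lam :
  (forall j, (x j)%:~R = comb (baseSimplex r m) lam j) ->
  lam ord0 * (r ^ m)%N%:R = (x ord_max - \sum_j x (wid j))%:~R /\
  (forall j, lam (lift ord0 j) = (x (wid j))%:~R + lam ord0 * ((r - 1) * r ^ j)%N%:R).
Proof.
move=> xE; have [|//|lam0E lamS] :=
  @baseSimplex_coefs m lam (fun j => (x (wid j))%:~R) (x ord_max)%:~R.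
- by move=> j; rewrite xE comb_wid.
- by rewrite xE comb_max.
by split=> //; rewrite lam0E intrB rmorph_sum.
Qed.

Lemma halfopen_par_pt m x lam : in_halfopen_with (baseSimplex r m) x lam ->
  exists2 b, (b < r ^ m)%N & lam ord0 = b%:R / (r ^ m)%N%:R /\ x =1 par_pt m b.
Proof.
move=> [lam01 /comb_coefs[lam0E lamS]].
have p_gt0 := expr_gt0 m; set p := (r ^ m)%N in p_gt0 lam0E lamS *.
set bz := x ord_max - \sum_j x (wid j) in lam0E.
have /andP[bz_ge0 bz_lt] : 0 <= bz < p%:Z.
  by apply: (intr_scale_range p_gt0 (lam01 ord0)); rewrite -lam0E mulrC.
exists (absz bz); first by rewrite -ltz_nat gez0_abs.
set b := absz bz; have bE : bz = b%:Z by rewrite gez0_abs.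
have lam0b : lam ord0 * p%:R = b%:R by rewrite lam0E bE.
split; first by rewrite -lam0b mulfK // pnatr_eq0 -lt0n.
have x_wid j : x (wid j) = - (carry m b j)%:Z.
  apply: (divn_floor_unique p_gt0); apply: (intr_scale_range p_gt0 (lam01 (lift ord0 j))).
  rewrite intrD intrM lamS [(_ * _ * _)%N%:~R](_ : _ = b%:R * ((r - 1) * r ^ j)%N%:R).
    by rewrite -lam0b; ring.
  by rewrite -natrM mulnA.
have sum_wid : \sum_j x (wid j) = \sum_j par_pt m b (wid j).
  by apply: eq_bigr => j _; rewrite x_wid par_pt_wid.
apply: eq_on_wid_max => [|j]; last by rewrite x_wid par_pt_wid.
by move: (par_pt_index m b); rewrite -bE /bz sum_wid => /addIr.
Qed.

Lemma open_par_pt m b x : (0 < m)%N -> (b < r ^ m)%N -> x =1 par_pt m b ->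
  in_open (baseSimplex r m) x <-> ~~ (r %| b)%N.
Proof.
case: m x => // m x _ b_lt xE; split; last first.
  move=> r_ndvd_b; have b_gt0 : (0 < b)%N.
    by rewrite lt0n; apply: contraNneq r_ndvd_b => ->.
  exists (par_coef m.+1 b); split=> [i|j]; last by rewrite xE par_pt_comb.
  by rewrite par_coef_gt0 //; case/andP: (par_coef_range b_lt i).
move=> [lam [lam01 /comb_coefs[lam0E lamS]]]; apply/negP => /dvdnP[k bE].
have lam0k : lam ord0 = (k * r)%N%:R / (r ^ m.+1)%N%:R.
  apply: (canRL (mulfK (natr_expr_neq0 rat m.+1))); rewrite lam0E -bE.
  by rewrite (eq_bigr _ (fun j _ => xE (wid j))) xE par_pt_index.
have := lam01 (lift ord0 ord_max).
rewrite lamS lam0k [_ * _](_ : _ = (k * (r - 1))%N%:R); last first.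
  have r_neq0 : r%:R != 0 :> rat by rewrite pnatr_eq0; lia.
  have rm_neq0 := natr_expr_neq0 rat m.
  by rewrite /= expnS !natrM; field; rewrite r_neq0 rm_neq0.
by rewrite -[_%:R]/((k * (r - 1))%N%:Z%:~R) -intrD -[0]/(0%:~R) -[1]/(1%:~R) !ltr_int; lia.
Qed.

Lemma par_pt_halfopen m b : (b < r ^ m)%N ->
  in_halfopen_with (baseSimplex r m) (par_pt m b) (par_coef m b).
Proof. by move=> b_lt; split; [exact: par_coef_range | exact: par_pt_comb]. Qed.

Lemma halfopen_index m b x lam : in_halfopen_with (baseSimplex r m) x lam ->
  lam ord0 = b%:R / (r ^ m)%N%:R -> x =1 par_pt m b.
Proof.
have rm_neq0 := natr_expr_neq0 rat m.
move=> /halfopen_par_pt[b' _ [-> xE]] /(congr1 ( *%R^~ (r ^ m)%N%:R)).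
by rewrite /= !mulfVK // => /eqP; rewrite eqr_nat => /eqP <-.
Qed.

Lemma open_par_pt_index m x : (0 < m)%N -> in_open (baseSimplex r m) x ->
  exists2 b : 'I_(r ^ m), ~~ (r %| b)%N & x =1 par_pt m b.
Proof.
move=> m_gt0 x_open; have [lam /halfopen_par_pt[b b_lt [_ xE]]] := open_halfopen x_open.
by exists (Ordinal b_lt) => //=; rewrite -(open_par_pt m_gt0 b_lt xE).
Qed.

Definition hstar_poly m : {poly int} := \sum_(b < r ^ m) 'X^(height m b).

Lemma lstar_baseSimplex m : (0 < m)%N ->
  lstar (baseSimplex r m) = \sum_(b < r ^ m | ~~ (r %| b)%N) 'X^(height m b).
Proof.
move=> m_gt0; rewrite /lstar -big_mkcond /=.
apply: (sum_reindex_rel (C := fun b : 'I_(r ^ m) => ~~ (r %| b)%N)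
  (E := fun k b => [forall j, boxpt k j == par_pt m b j])).
- move=> k /pboolP /(open_par_pt_index m_gt0)[b r_ndvd_b xE].
  by exists b => //; apply/forallP => j; rewrite xE.
- move=> k b r_ndvd_b /forallP kE; apply/pboolP.
  by rewrite (open_par_pt m_gt0 (ltn_ord b)) // => j; apply/eqP.
- move=> k b1 b2 _ _ /forallP kE1 /forallP kE2; apply/val_inj/(par_pt_inj (m := m)) => j.
  by rewrite -(eqP (kE1 j)) (eqP (kE2 j)).
- move=> b r_ndvd_b.
  have /in_open_bound/boxpt_surj[k kE] : in_open (baseSimplex r m) (par_pt m b).
    by rewrite (open_par_pt m_gt0 (ltn_ord b)).
  by exists k; apply/forallP => j; rewrite kE.
- move=> k1 k2 b /forallP kE1 /forallP kE2; apply: boxpt_inj => j.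
  by rewrite (eqP (kE1 j)) (eqP (kE2 j)).
- by move=> k b /forallP kE; rewrite (eqP (kE ord_max)) par_pt_max.
Qed.

Lemma carry_mulr m b j : carry m.+1 (r * b) j = carry m b j.
Proof. by rewrite /carry expnS -!mulnA divnMl //; lia. Qed.

Lemma height_mulr m b : height m.+1 (r * b) = height m b.
Proof.
rewrite /height /carries big_ord_recr /= (eq_bigr _ (fun (j : 'I_m) _ => carry_mulr m b j)).
have -> : carry m.+1 (r * b) m = (b * (r - 1))%N.
  by rewrite carry_mulr /carry mulnK // expr_gt0.
have := carries_le m b; rewrite /carries; nia.
Qed.

Lemma hstar_poly_sub m :
  hstar_poly m.+1 - hstar_poly m = \sum_(b < r ^ m.+1 | ~~ (r %| b)%N) 'X^(height m.+1 b).
Proof.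
rewrite /hstar_poly (bigID (fun b : 'I_(r ^ m.+1) => ~~ (r %| b)%N)) /=.
rewrite [X in _ + X - _](_ : _ = \sum_(b < r ^ m) 'X^(height m b)) ?addrK //.
have r_gt0 : (0 < r)%N by lia.
apply: (sum_reindex_rel (C := fun _ => true)
  (E := fun b (b' : 'I_(r ^ m)) => val b == (r * b')%N)).
- move=> b; rewrite negbK => /dvdnP[k bE].
  have k_lt : (k < r ^ m)%N by rewrite -(ltn_pmul2l r_gt0) -expnS mulnC -bE.
  by exists (Ordinal k_lt); rewrite //= bE mulnC.
- by move=> b b' _ /eqP ->; rewrite negbK dvdn_mulr.
- by move=> b b1 b2 _ _ /eqP ->; rewrite eqn_pmul2l // => /eqP /val_inj.
- move=> b' _; have rb_lt : (r * b' < r ^ m.+1)%N by rewrite expnS ltn_pmul2l.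
  by exists (Ordinal rb_lt).
- by move=> b1 b2 b' /eqP e1 /eqP e2; apply: val_inj; rewrite /= e1 e2.
- by move=> b b' /eqP ->; rewrite height_mulr.
Qed.

Lemma carries_shift m q b : carries m (q * r ^ m + b) = (q * (r ^ m - 1) + carries m b)%N.
Proof.
rewrite /carries (eq_bigr (fun j : 'I_m => q * ((r - 1) * r ^ j) + carry m b j)%N) => [|j _].
  by rewrite big_split /= -big_distrr /= -(sum_geom_base m) addnK.
rewrite /carry [X in (X %/ _)%N](_ : _ = q * ((r - 1) * r ^ j) * r ^ m + b * (r - 1) * r ^ j)%N.
  by rewrite divnMDl ?expr_gt0.
by ring.
Qed.

Lemma dilate_coords m t (x : 'I_m -> int) : in_dilate (baseSimplex r m) t x ->
  exists2 D, (D <= r ^ m * t)%N &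
    (forall j : 'I_m, - (carry m D j)%:Z <= x j) /\ \sum_j x j = t%:Z - D%:Z.
Proof.
move=> [mu [mu_ge0 [muE xE]]].
have [mu0E muS] := baseSimplex_coefs xE muE.
have p_gt0 := expr_gt0 m; set p := (r ^ m)%N in p_gt0 mu0E muS *.
have pR_gt0 : (0 : rat) < p%:R by rewrite ltr0n.
have mu0_le : mu ord0 <= t%:R by rewrite -muE big_ord_recl lerDl sumr_ge0.
set Dz := t%:Z - \sum_j x j.
have mu0Dz : mu ord0 * p%:R = Dz%:~R by rewrite intrB rmorph_sum -mu0E.
have Dz_ge0 : 0 <= Dz by rewrite -(ler_int rat) -mu0Dz mulr_ge0.
have Dz_le : Dz <= (p * t)%N%:Z.
  by rewrite -(ler_int rat) -mu0Dz mulrC -[_%:~R]/((p * t)%N%:R) natrM ler_wpM2l // ltW.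
exists (absz Dz); first by rewrite -lez_nat gez0_abs.
set D := absz Dz; have DE : Dz = D%:Z by rewrite gez0_abs.
split=> [j|]; last by rewrite -DE /Dz opprB addrC subrK.
apply: (divn_floor_le p_gt0); rewrite -(ler_int rat) intrD intrM.
rewrite [(_ * _ * _)%N%:~R](_ : _ = mu ord0 * p%:R * ((r - 1) * r ^ j)%N%:R).
  by rewrite [X in 0 <= X](_ : _ = p%:R * mu (lift ord0 j)) ?mulr_ge0 // muS; ring.
by rewrite mu0Dz DE -natrM mulnA.
Qed.

Section DilateCodes.
Variables m t : nat.

(* The lattice point x of t B_(r,m) with coefficient mu_0 = D / r^m is encoded by D
   and the nonnegative integers y_j = x_j + carry m D j, which sum to at most t. *)
Definition dcode := ('I_(r ^ m * t.+1) * {ffun 'I_m -> 'I_t.+1})%type.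
Definition dcode_ok (z : dcode) := (t + carries m z.1 == z.1 + \sum_j z.2 j)%N.
Definition dcode_pt (z : dcode) (j : 'I_m) : int := (z.2 j)%:Z - (carry m z.1 j)%:Z.

Lemma dcode_pt_sum z : dcode_ok z -> \sum_j dcode_pt z j = t%:Z - (z.1)%:Z.
Proof.
rewrite /dcode_ok /dcode_pt sumrB -!Posz_sum => /eqP.
by rewrite /carries; set s := (\sum_j _)%N; set c := (\sum_j carry _ _ _)%N; lia.
Qed.

Lemma dcode_pt_inj z1 z2 :
  dcode_ok z1 -> dcode_ok z2 -> dcode_pt z1 =1 dcode_pt z2 -> z1 = z2.
Proof.
move=> ok1 ok2 eq12.
have eqD : z1.1 = z2.1.
  apply: val_inj; have := dcode_pt_sum ok1; have := dcode_pt_sum ok2.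
  by rewrite -(eq_bigr _ (fun j _ => eq12 j)) => -> /addrI /oppr_inj [].
case: z1 z2 ok1 ok2 eq12 eqD => [D y1] [D2 y2] /= _ _ eq12 eqD; subst D2.
congr (_, _); apply/ffunP => j; apply: val_inj.
by have /addIr[] := eq12 j.
Qed.

Lemma dcode_pt_dilate z : dcode_ok z -> in_dilate (baseSimplex r m) t (dcode_pt z).
Proof.
move=> okz; set D := val z.1; set mu0 := D%:R / (r ^ m)%N%:R : rat.
have rm_neq0 := natr_expr_neq0 rat m.
pose mu i := if unlift ord0 i is Some j
  then (dcode_pt z j)%:~R + mu0 * ((r - 1) * r ^ j)%N%:R else mu0.
have muS j : mu (lift ord0 j) = (dcode_pt z j)%:~R + mu0 * ((r - 1) * r ^ j)%N%:R.
  by rewrite /mu liftK.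
have mu0E : mu ord0 = mu0 by rewrite /mu unlift_none.
exists mu; split; [|split].
- move=> i; case: (unliftP ord0 i) => [j|] ->; last by rewrite mu0E divr_ge0 ?ler0n.
  rewrite muS /mu0 carry_residue_rat /dcode_pt intrD intrN addrA subrK.
  by rewrite addr_ge0 ?divr_ge0 ?ler0n.
- rewrite big_ord_recl mu0E (eq_bigr _ (fun j _ => muS j)) big_split /= -mulr_sumr.
  rewrite -rmorph_sum dcode_pt_sum // -natr_sum.
  by rewrite natr_sum_geom_base rmorphB /= /mu0 mulrBr mulr1 divfK //; ring.
- by move=> j; rewrite sum_baseSimplex mu0E muS; ring.
Qed.

Lemma dilate_dcode x : in_dilate (baseSimplex r m) t x ->
  exists2 z, dcode_ok z & x =1 dcode_pt z.
Proof.
move=> /dilate_coords[D D_le [x_ge xsum]].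
pose y j := x j + (carry m D j)%:Z.
have y_ge0 j : 0 <= y j by rewrite /y -lerBlDr sub0r x_ge.
have ysum : \sum_j y j = t%:Z - D%:Z + (carries m D)%:Z.
  by rewrite big_split /= xsum Posz_sum.
have y_lt j : (absz (y j) < t.+1)%N.
  rewrite ltnS -lez_nat gez0_abs //; apply: le_trans (_ : \sum_k y k <= _).
    by rewrite (bigD1 j) //= lerDl sumr_ge0.
  by rewrite ysum; have := carries_le m D; lia.
have D_lt : (D < r ^ m * t.+1)%N by rewrite mulnS; have := expr_gt0 m; lia.
exists (Ordinal D_lt, [ffun j => Ordinal (y_lt j)]) => [|j]; last first.
  by rewrite /dcode_pt ffunE /= gez0_abs // /y addrK.
have sum_y : (\sum_j [ffun j => Ordinal (y_lt j)] j)%N%:Z = \sum_j y j.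
  by rewrite Posz_sum; apply: eq_bigr => j _; rewrite ffunE /= gez0_abs.
by rewrite /dcode_ok -eqz_nat !PoszD sum_y ysum /=; apply/eqP; lia.
Qed.

End DilateCodes.

Lemma ehr_dcode m t :
  ehr (baseSimplex r m) t = (\sum_(z : dcode m t | dcode_ok z) 1)%N.
Proof.
rewrite /ehr -sum1_card.
rewrite (eq_bigl (fun k => pbool (in_dilate (baseSimplex r m) t (boxpt k)))) => [|k]; last first.
  by rewrite inE.
apply: (sum_reindex_rel (C := @dcode_ok m t)
  (E := fun k z => [forall j, boxpt k j == dcode_pt z j])) => //.
- move=> k /pboolP /dilate_dcode[z okz xE].
  by exists z => //; apply/forallP => j; rewrite xE.
- move=> k z okz /forallP kE; apply/pboolP.
  by apply: eq_in_dilate (dcode_pt_dilate okz) => j; apply/esym/eqP.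
- move=> k z1 z2 ok1 ok2 /forallP kE1 /forallP kE2; apply: dcode_pt_inj => // j.
  by rewrite -(eqP (kE1 j)) (eqP (kE2 j)).
- move=> z /dcode_pt_dilate/in_dilate_bound/boxpt_surj[k kE].
  by exists k; apply/forallP => j; rewrite kE.
- move=> k1 k2 z /forallP kE1 /forallP kE2; apply: boxpt_inj => j.
  by rewrite (eqP (kE1 j)) (eqP (kE2 j)).
Qed.

Lemma ehr_fiber m t (D : 'I_(r ^ m.+1 * t.+1)) :
  (\sum_(y : {ffun 'I_m.+1 -> 'I_t.+1} | dcode_ok (D, y)) 1 =
   if (D <= t + carries m.+1 D)%N then 'C(t + carries m.+1 D - D + m, m) else 0)%N.
Proof.
have c_le := carries_le m.+1 D; rewrite /dcode_ok /=; case: leqP => [D_le|D_gt].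
  rewrite -(@count_compositions m t.+1); last by lia.
  by apply: eq_bigl => y; apply/eqP/eqP => [->|->]; rewrite ?addKn ?subnKC.
by apply: big1 => y /eqP; lia.
Qed.

Lemma ehr_baseSimplex m t : ehr (baseSimplex r m.+1) t =
  (\sum_(b < r ^ m.+1) if (height m.+1 b <= t)%N
     then 'C(t - height m.+1 b + m.+1, m.+1) else 0)%N.
Proof.
rewrite ehr_dcode; set p := (r ^ m.+1)%N.
transitivity (\sum_(D < p * t.+1)
   \sum_(y : {ffun 'I_m.+1 -> 'I_t.+1} | dcode_ok (D, y)) 1)%N.
  by rewrite pair_big_dep.
rewrite (eq_bigr _ (fun D _ => ehr_fiber D)) mulnC.
rewrite (sum_ord_mul_divmod (fun D => if (D <= t + carries m.+1 D)%N
  then 'C(t + carries m.+1 D - D + m, m) else 0)%N).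
apply: eq_bigr => b _; rewrite -hockey_stick_shift; apply: eq_bigr => q _.
rewrite carries_shift /height; have := carries_le m.+1 b; have := expr_gt0 m.+1.
rewrite -/p; move: (nat_of_ord b) (nat_of_ord q) (carries m.+1 b) => {}b {}q c p_gt0 c_le.
have qpE : (q * p = q * (p - 1) + q)%N by rewrite -{1}(subnK p_gt0) mulnDr muln1.
by case: leqP => D_le; case: leqP => qh_le; first congr 'C(_, _); lia.
Qed.

Lemma hstar_baseSimplex m : is_hstar (baseSimplex r m.+1) m.+1 (hstar_poly m.+1).
Proof.
move=> t; rewrite ehr_baseSimplex Posz_sum.
rewrite (eq_bigr (fun j : 'I_t.+1 => \sum_(b < r ^ m.+1)
    ((j == height m.+1 b :> nat)%:R * 'C(t - j + m.+1, m.+1)%:Z))) => [|j _]; last first.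
  by rewrite /hstar_poly coef_sum mulr_suml; apply: eq_bigr => b _; rewrite coefXn.
rewrite exchange_big /=; apply: eq_bigr => b _.
by rewrite (sum_ord_delta _ _ (fun j => 'C(t - j + m.+1, m.+1)%:Z)) ltnS; case: ifP.
Qed.

End BaseSimplex.

Theorem mainTheorem6 (r n : nat) (hr : (2 <= r)%N) (hn : (2 <= n)%N) :
  (forall b : nat, (0 < b < r ^ n)%N ->
     (exists (x : 'I_n.+1 -> int) (lam : 'I_n.+1 -> rat),
        in_halfopen_with (baseSimplex r n) x lam /\
        lam ord0 = b%:R / ((r ^ n)%N)%:R) /\
     (forall (x : 'I_n.+1 -> int) (lam : 'I_n.+1 -> rat),
        in_halfopen_with (baseSimplex r n) x lam ->
        lam ord0 = b%:R / ((r ^ n)%N)%:R ->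
        (in_open (baseSimplex r n) x <-> ~~ (r %| b)%N)))
  /\
  (exists h1 h2 : {poly int},
     is_hstar (baseSimplex r n) n h1 /\
     is_hstar (baseSimplex r n.-1) n.-1 h2 /\
     lstar (baseSimplex r n) = h1 - h2).
Proof.
have n_gt0 : (0 < n)%N by lia.
split=> [b /andP[b_gt0 b_lt]|].
  split; first by exists (@par_pt r n b), (@par_coef r n b); split; first exact: par_pt_halfopen.
  by move=> x lam x_halfopen /(halfopen_index hr x_halfopen); apply: open_par_pt.
case: n hn n_gt0 => [|[|m]] // _ n_gt0.
exists (hstar_poly r m.+2), (hstar_poly r m.+1).
rewrite lstar_baseSimplex // -hstar_poly_sub //.
by do ?split; exact: hstar_baseSimplex hr _.
Qed.
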